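(* Let $G=(V,E)$ be a graph with $|V|>4$ and let $v\in V$ be a 1-separator (cut vertex) of $G$. Let $A_1,\ldots,A_\ell$ be the connected components of $G-\{v\}$. Then there is an $i\in\{1,\ldots,\ell\}$ such that $\delta(G)=\delta(G-V(A_i))$.
   Context: For a graph $G=(V,E)$, $\mathrm{dist}(x,y)$ denotes the length of a shortest $x$-$y$ path ($\infty$ if none exists). For $a,b,c,d\in V$ let $D_1=\mathrm{dist}(a,b)+\mathrm{dist}(c,d)$, $D_2=\mathrm{dist}(a,c)+\mathrm{dist}(b,d)$, $D_3=\mathrm{dist}(a,d)+\mathrm{dist}(b,c)$, and define $\delta(a,b,c,d)=|D_i-D_j|$ where $\{i,j,k\}=\{1,2,3\}$ and $D_k\le\min\{D_i,D_j\}$. The hyperbolicity of $G$ is $\delta(G)=\max_{a,b,c,d\in V}\delta(a,b,c,d)$. $G-W$ denotes the graph obtained by deleting the vertices in $W$; a 1-separator is a vertex whose deletion increases the number of connected components. *)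

From mathcomp Require Import all_boot.
Set Implicit Arguments.
Unset Strict Implicit.
Unset Printing Implicit Defensive.

(* Subgraphs obtained by
   deleting vertices are represented as induced subgraphs on a vertex set
   S : {set T}. *)
Section Graph.
Variables (T : finType) (e : rel T).

Definition simple_graph : Prop := symmetric e /\ irreflexive e.

(* reach S n x y : there is a walk of length exactly n from x to y all of
   whose vertices after x lie in S (x itself is always taken in S below). *)
Fixpoint reach (S : {set T}) (n : nat) (x y : T) : bool :=
  match n with
  | 0 => x == y
  | n'.+1 => [exists z in S, e x z && reach S n' z y]
  end.

Definition connected_in (S : {set T}) (x y : T) : Prop :=
  x \in S /\ y \in S /\ exists n, reach S n x y.

Definition connected_graph (S : {set T}) : Prop :=
  forall x y, x \in S -> y \in S -> exists n, reach S n x y.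

(* Distance in G[S]: the least n with a walk of length n (a shortest walk is
   a shortest path, of length < #|T|).  If there is no walk the value is the
   sentinel #|T|; this never happens for connected G[S]. *)
Definition dist (S : {set T}) (x y : T) : nat :=
  find (fun n => reach S n x y) (iota 0 #|T|).

Definition delta4 (S : {set T}) (a b c d : T) : nat :=
  let D1 := dist S a b + dist S c d in
  let D2 := dist S a c + dist S b d in
  let D3 := dist S a d + dist S b c in
  if D1 <= minn D2 D3 then maxn D2 D3 - minn D2 D3
  else if D2 <= minn D1 D3 then maxn D1 D3 - minn D1 D3
  else maxn D1 D2 - minn D1 D2.

Definition hyperbolicity (S : {set T}) : nat :=
  \max_(a in S) \max_(b in S) \max_(c in S) \max_(d in S) delta4 S a b c d.

Definition component (S : {set T}) (u : T) : {set T} :=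
  [set w in S | [exists n : 'I_#|T|, reach S n u w]].

Definition components (S : {set T}) : {set {set T}} :=
  [set component S u | u in S].

Definition n_components (S : {set T}) : nat := #|components S|.

Definition separator1 (v : T) : bool :=
  n_components [set: T] < n_components [set~ v].

End Graph.

From mathcomp Require Import all_boot zify.
Set Implicit Arguments.
Unset Strict Implicit.
Unset Printing Implicit Defensive.

(* Let (a, b, c, d) realise delta(G).  Two distinct components A1, A2 of
   G - v are disjoint, so one of them, A, contains at most two of a, b, c, d.
   An edge leaving A ends at v, so collapsing A onto v maps edges to edges or
   single vertices: it retracts G onto G - A without lengthening walks, hence
   G - A is isometric in G.  If A contains at most one of the four points,
   that point x is separated from the others by v, so collapsing it lowers
   each of D1, D2, D3 by the same amount d(x, v) and keeps delta.  If A
   contains exactly two of them, the two sums pairing each point of A with a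
   point outside A both equal s = d(a,v) + d(b,v) + d(c,v) + d(d,v), which
   bounds the third sum by the triangle inequality, so delta(a,b,c,d) = 0.
   Either way the collapsed quadruple lies in G - A and witnesses
   delta(G - A) >= delta(G). *)

Section Walks.
Variables (T : finType) (e : rel T).

Lemma reach_cat (S : {set T}) m n x y z :
  reach e S m x y -> reach e S n y z -> reach e S (m + n) x z.
Proof.
elim: m x => [|m IH] x /=; first by move/eqP->.
case/existsP=> w /and3P[wS exw rwy] ryz.
by apply/existsP; exists w; rewrite wS exw IH.
Qed.

Lemma reach_sub (S S' : {set T}) n x y :
  S \subset S' -> reach e S n x y -> reach e S' n x y.
Proof.
move=> sSS'; elim: n x => [|n IH] x //=.
case/existsP=> w /and3P[wS exw rwy]; apply/existsP; exists w.
by rewrite (subsetP sSS' _ wS) exw IH.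
Qed.

Lemma reach_rev (S : {set T}) n x y :
  symmetric e -> x \in S -> reach e S n x y -> reach e S n y x.
Proof.
move=> sym; elim: n x => [|n IH] x /=; first by move=> _ /eqP->.
move=> xS /existsP[w /and3P[wS exw rwy]].
have rwx : reach e S 1 w x by apply/existsP; exists x; rewrite xS sym exw eqxx.
by have := reach_cat (IH _ wS rwy) rwx; rewrite addn1.
Qed.

Lemma reach_path (S : {set T}) n x y : reach e S n x y ->
  exists p, [/\ size p = n, path e x p, last x p = y & all (mem S) p].
Proof.
elim: n x => [|n IH] x /=; first by move/eqP->; exists [::].
case/existsP=> w /and3P[wS exw /IH[p [<- pp <- pS]]].
by exists (w :: p); rewrite /= exw pp wS pS.
Qed.

Lemma path_reach (S : {set T}) x p :
  path e x p -> all (mem S) p -> reach e S (size p) x (last x p).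
Proof.
elim: p x => [|w p IH] x /=; first by rewrite eqxx.
case/andP=> exw pp /andP[wS pS]; apply/existsP; exists w.
by rewrite wS exw IH.
Qed.

(* A shortest walk is a path, hence has fewer than #|T| edges. *)
Lemma reach_short (S : {set T}) n x y : reach e S n x y ->
  exists m, [/\ m < #|T|, m <= n & reach e S m x y].
Proof.
case/reach_path=> p [<- ep <- pS].
have [p' ep' up' sub_p'] := shortenP ep.
exists (size p'); split.
- by have := max_card (mem (x :: p')); rewrite (card_uniqP up').
- by case/andP: up' => _ /uniq_leq_size; apply.
- by apply: path_reach => //; apply/allP => z /sub_p' zp; exact: (allP pS).
Qed.

Lemma dist_le (S : {set T}) n x y : reach e S n x y -> dist e S x y <= n.
Proof.
case/reach_short=> m [mT mn rm]; apply: leq_trans mn.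
rewrite leqNgt; apply/negP => /(before_find 0).
by rewrite nth_iota // add0n rm.
Qed.

Lemma reach_dist (S : {set T}) n x y :
  reach e S n x y -> reach e S (dist e S x y) x y.
Proof.
case/reach_short=> m [mT _ rm].
have has_m : has (fun k => reach e S k x y) (iota 0 #|T|).
  by apply/hasP; exists m; rewrite // mem_iota.
have := nth_find 0 has_m; rewrite nth_iota //.
by rewrite has_find size_iota in has_m.
Qed.

Lemma reach_retract (S S' : {set T}) (r : T -> T) :
  (forall x, r x \in S) -> (forall x y, e x y -> r x = r y \/ e (r x) (r y)) ->
  forall n x y, reach e S' n x y -> exists2 m, m <= n & reach e S m (r x) (r y).
Proof.
move=> rS re; elim=> [|n IH] x y /=; first by move/eqP->; exists 0 => //=.
case/existsP=> z /and3P[_ exz /IH[m mn rm]].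
have [->|erxz] := re _ _ exz; first by exists m => //; exact: leqW.
exists m.+1 => //; apply/existsP; exists (r z).
by rewrite rS erxz.
Qed.

Lemma component_memP (S : {set T}) x y :
  reflect (y \in S /\ exists n, reach e S n x y) (y \in component e S x).
Proof.
rewrite inE; apply: (iffP andP) => [[yS /existsP[n rn]]|[yS [n /reach_short]]].
  by split; last exists n.
by case=> m [mT _ rm]; split; last (apply/existsP; exists (Ordinal mT)).
Qed.

End Walks.

Definition delta3 (D1 D2 D3 : nat) : nat :=
  if D1 <= minn D2 D3 then maxn D2 D3 - minn D2 D3
  else if D2 <= minn D1 D3 then maxn D1 D3 - minn D1 D3
  else maxn D1 D2 - minn D1 D2.

Lemma delta3D k D1 D2 D3 : delta3 (D1 + k) (D2 + k) (D3 + k) = delta3 D1 D2 D3.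
Proof. by rewrite /delta3; do !case: ifP => ?; lia. Qed.

Lemma delta3_eq0 s D1 D2 D3 : D1 <= s -> D2 <= s -> D3 <= s ->
  1 < (D1 == s) + (D2 == s) + (D3 == s) -> delta3 D1 D2 D3 = 0.
Proof. by rewrite /delta3; do !case: ifP => ?; lia. Qed.

Section Hyperbolicity.
Variables (T : finType) (e : rel T).

Lemma delta4E (S : {set T}) a b c d : delta4 e S a b c d =
  delta3 (dist e S a b + dist e S c d) (dist e S a c + dist e S b d)
         (dist e S a d + dist e S b c).
Proof. by []. Qed.

Lemma delta4_le_hyperbolicity (S : {set T}) a b c d :
  a \in S -> b \in S -> c \in S -> d \in S ->
  delta4 e S a b c d <= hyperbolicity e S.
Proof.
move=> aS bS cS dS; apply: (bigmax_sup a) => //; apply: (bigmax_sup b) => //.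
by apply: (bigmax_sup c) => //; apply: (bigmax_sup d).
Qed.

Lemma hyperbolicity_witness (S : {set T}) : 0 < #|S| -> exists a b c d,
  [/\ a \in S, b \in S, c \in S, d \in S &
      hyperbolicity e S = delta4 e S a b c d].
Proof.
move=> S_gt0; rewrite /hyperbolicity.
have [a aS ->] := eq_bigmax_cond
  (fun a => \max_(b in S) \max_(c in S) \max_(d in S) delta4 e S a b c d) S_gt0.
have [b bS ->] := eq_bigmax_cond
  (fun b => \max_(c in S) \max_(d in S) delta4 e S a b c d) S_gt0.
have [c cS ->] := eq_bigmax_cond (fun c => \max_(d in S) delta4 e S a b c d) S_gt0.
have [d dS ->] := eq_bigmax_cond (fun d => delta4 e S a b c d) S_gt0.
by exists a, b, c, d.
Qed.

Section Isometric.
Variables S S' : {set T}.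
Hypothesis dist_SS' : {in S &, forall x y, dist e S x y = dist e S' x y}.

Lemma delta4_isometric a b c d : a \in S -> b \in S -> c \in S -> d \in S ->
  delta4 e S a b c d = delta4 e S' a b c d.
Proof. by move=> aS bS cS dS; rewrite !delta4E !dist_SS'. Qed.

Lemma hyperbolicity_isometric_le :
  S \subset S' -> hyperbolicity e S <= hyperbolicity e S'.
Proof.
move=> sSS'; apply/bigmax_leqP => a aS; apply/bigmax_leqP => b bS.
apply/bigmax_leqP => c cS; apply/bigmax_leqP => d dS.
by rewrite delta4_isometric // delta4_le_hyperbolicity // (subsetP sSS').
Qed.

End Isometric.
End Hyperbolicity.

Section Components.
Variables (T : finType) (e : rel T).
Hypothesis sym : symmetric e.

Lemma component_id (S : {set T}) u y : u \in S -> y \in component e S u ->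
  component e S y = component e S u.
Proof.
move=> uS /component_memP[yS [n run]]; apply/setP => w.
apply/component_memP/component_memP => -[wS [m rm]]; split => //.
  by exists (n + m); apply: reach_cat run rm.
by exists (n + m); apply: reach_cat (reach_rev sym uS run) rm.
Qed.

Lemma components_disjoint (S : {set T}) A1 A2 :
  A1 \in components e S -> A2 \in components e S -> A1 != A2 ->
  [disjoint A1 & A2].
Proof.
case/imsetP=> u1 u1S ->; case/imsetP=> u2 u2S -> neqA.
apply/pred0P => x /=; apply/negP => /andP[x1 x2].
by rewrite -(component_id u1S x1) (component_id u2S x2) eqxx in neqA.
Qed.

End Components.

Lemma n_components_gt0 (T : finType) (e : rel T) (S : {set T}) :
  0 < #|S| -> 0 < n_components e S.
Proof.
by case/card_gt0P=> x xS; apply/card_gt0P; exists (component e S x); exact: imset_f.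
Qed.

Lemma count_disjoint_le (T : finType) (A1 A2 : {set T}) (s : seq T) :
  [disjoint A1 & A2] -> count (mem A1) s + count (mem A2) s <= size s.
Proof.
move=> dis; rewrite -(count_predC (mem A1) s) leq_add2l.
by apply: sub_count => x xA2; rewrite /= (disjointFl dis xA2).
Qed.

Section CutVertex.
Variables (T : finType) (e : rel T) (v : T).
Hypotheses (sym : symmetric e) (conn : connected_graph e [set: T]).
Local Notation dT := (dist e [set: T]).

Lemma reach_dT x y : reach e [set: T] (dT x y) x y.
Proof. by have [n rn] := conn (in_setT x) (in_setT y); exact: reach_dist rn. Qed.

Lemma dT_sym x y : dT x y = dT y x.
Proof. by apply/eqP; rewrite eqn_leq !dist_le // reach_rev ?in_setT ?reach_dT. Qed.

Lemma dT_triangle x y z : dT x z <= dT x y + dT y z.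
Proof. exact/dist_le/reach_cat/reach_dT/reach_dT. Qed.

Section DeleteComponent.
Variable A : {set T}.
Hypothesis A_comp : A \in components e [set~ v].

Lemma v_notin_component : v \notin A.
Proof.
by case/imsetP: A_comp => u _ ->; apply/component_memP; rewrite !inE eqxx; case.
Qed.

Lemma edge_leave_component x y : x \in A -> y \notin A -> e x y -> y = v.
Proof.
case/imsetP: A_comp => u _ -> /component_memP[_ [n rux]] yA exy.
apply/eqP; apply: contraNT yA => yv; apply/component_memP.
split; first by rewrite in_setC1.
exists (n + 1); apply: reach_cat rux _.
by apply/existsP; exists y; rewrite in_setC1 yv exy eqxx.
Qed.

Lemma reach_leave_component n x y : x \in A -> y \notin A ->
  reach e [set: T] n x y ->
  exists k l, [/\ k + l = n, reach e [set: T] k x v & reach e [set: T] l v y].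
Proof.
elim: n x => [|n IH] x xA yA /=; first by move/eqP=> xy; rewrite -xy xA in yA.
case/existsP=> z /and3P[_ exz rzy]; case: (boolP (z \in A)) => zA.
  have [k [l [<- rxv rvy]]] := IH z zA yA rzy.
  by exists k.+1, l; split => //; apply/existsP; exists z; rewrite in_setT exz.
have zv := edge_leave_component xA zA exz.
exists 1, n; split=> //; last by rewrite -zv.
by apply/existsP; exists z; rewrite in_setT exz zv /=.
Qed.

Lemma dist_leave_component x y : x \in A -> y \notin A ->
  dT x y = dT x v + dT v y.
Proof.
move=> xA yA; apply/eqP; rewrite eqn_leq dT_triangle /=.
have [k [l [<- rxv rvy]]] := reach_leave_component xA yA (reach_dT x y).
by rewrite leq_add ?(dist_le rxv) ?(dist_le rvy).
Qed.

Definition collapse x := if x \in A then v else x.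

Lemma collapse_id x : x \notin A -> collapse x = x.
Proof. by rewrite /collapse => /negbTE->. Qed.

Lemma collapse_in x : collapse x \in [set: T] :\: A.
Proof.
rewrite /collapse !inE andbT; case: ifP => [_|/negbT //].
exact: v_notin_component.
Qed.

Lemma collapse_edge x y :
  e x y -> collapse x = collapse y \/ e (collapse x) (collapse y).
Proof.
rewrite /collapse => exy; case: ifP => xA; case: ifP => yA; [by left| | |by right].
- by left; rewrite (edge_leave_component xA (negbT yA) exy).
- by left; rewrite (edge_leave_component yA (negbT xA)) // sym.
Qed.

Lemma dist_delete_component :
  {in [set: T] :\: A &, forall x y, dist e ([set: T] :\: A) x y = dT x y}.
Proof.
move=> x y; rewrite !inE !andbT => xA yA.
have [m le_m rm] := reach_retract collapse_in collapse_edge (reach_dT x y).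
rewrite !collapse_id // in rm.
apply/eqP; rewrite eqn_leq (leq_trans (dist_le rm) le_m) /=.
exact/dist_le/(reach_sub (subsetT _))/reach_dist/rm.
Qed.

Lemma dist_collapse x y : ~~ ((x \in A) && (y \in A)) ->
  dT x y = dT (collapse x) (collapse y) + (x \in A) * dT x v + (y \in A) * dT y v.
Proof.
rewrite /collapse; case: (boolP (x \in A)) => xA; case: (boolP (y \in A)) => yA //= _.
- by rewrite dist_leave_component //; lia.
- by rewrite dT_sym dist_leave_component // (dT_sym v); lia.
- lia.
Qed.

Lemma delta4_collapse a b c d : count (mem A) [:: a; b; c; d] <= 1 ->
  delta4 e [set: T] (collapse a) (collapse b) (collapse c) (collapse d) =
  delta4 e [set: T] a b c d.
Proof.
rewrite /= => cnt; rewrite !delta4E.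
rewrite (@dist_collapse a b) ?(@dist_collapse a c) ?(@dist_collapse a d)
  ?(@dist_collapse b c) ?(@dist_collapse b d) ?(@dist_collapse c d); try lia.
rewrite -(delta3D ((a \in A) * dT a v + (b \in A) * dT b v +
                   (c \in A) * dT c v + (d \in A) * dT d v)).
by congr delta3; lia.
Qed.

Lemma delta4_two_in_component_eq0 a b c d : count (mem A) [:: a; b; c; d] = 2 ->
  delta4 e [set: T] a b c d = 0.
Proof.
rewrite /= => cnt.
have tri x y : dT x y <= dT x v + dT y v by rewrite (dT_sym y); exact: dT_triangle.
have across x y : (x \in A) != (y \in A) -> dT x y = dT x v + dT y v.
  case: (boolP (x \in A)) => xA; case: (boolP (y \in A)) => yA //= _.
  - by rewrite dist_leave_component // (dT_sym v).
  - by rewrite dT_sym dist_leave_component // (dT_sym v) addnC.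
rewrite delta4E; apply: (delta3_eq0 (s := dT a v + dT b v + dT c v + dT d v)).
- by have := tri a b; have := tri c d; lia.
- by have := tri a c; have := tri b d; lia.
- by have := tri a d; have := tri b c; lia.
move: cnt (across a b) (across a c) (across a d) (across b c) (across b d) (across c d).
lia.
Qed.

Lemma hyperbolicity_delete_component a b c d :
  hyperbolicity e [set: T] = delta4 e [set: T] a b c d ->
  count (mem A) [:: a; b; c; d] <= 2 ->
  hyperbolicity e [set: T] = hyperbolicity e ([set: T] :\: A).
Proof.
move=> hyp_abcd cnt; apply/eqP; rewrite eqn_leq andbC.
rewrite (hyperbolicity_isometric_le dist_delete_component (subsetT _)) /=.
have le_collapse : delta4 e [set: T] a b c d <=
    delta4 e [set: T] (collapse a) (collapse b) (collapse c) (collapse d).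
  move: cnt; rewrite leq_eqVlt ltnS => /orP[/eqP/delta4_two_in_component_eq0-> //|].
  by move/delta4_collapse->.
rewrite hyp_abcd (leq_trans le_collapse) //.
by rewrite -(delta4_isometric dist_delete_component) ?collapse_in
  ?delta4_le_hyperbolicity ?collapse_in.
Qed.

End DeleteComponent.
End CutVertex.

Theorem lemma3 (T : finType) (e : rel T) (v : T) :
  simple_graph e ->
  connected_graph e [set: T] ->
  4 < #|T| ->
  separator1 e v ->
  exists2 A, A \in components e [set~ v] &
    hyperbolicity e [set: T] = hyperbolicity e ([set: T] :\: A).
Proof.
move=> [sym _] conn T_gt4 sep_v.
have T_gt0 : 0 < #|[set: T]| by rewrite cardsT (leq_trans _ T_gt4).
have [A1 [A2 [A1_comp A2_comp neqA]]] : exists A1 A2,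
    [/\ A1 \in components e [set~ v], A2 \in components e [set~ v] & A1 != A2].
  by apply/card_gt1P; exact: leq_ltn_trans (n_components_gt0 e T_gt0) sep_v.
have [a [b [c [d [_ _ _ _ hyp_abcd]]]]] := hyperbolicity_witness e T_gt0.
have := count_disjoint_le [:: a; b; c; d] (components_disjoint sym A1_comp A2_comp neqA).
case: (leqP (count (mem A1) [:: a; b; c; d]) 2) => [cnt1 _ | cnt1 cnt12].
  exists A1 => //.
  exact: (hyperbolicity_delete_component sym conn A1_comp hyp_abcd cnt1).
exists A2 => //; apply: (hyperbolicity_delete_component sym conn A2_comp hyp_abcd).
by move: cnt12; rewrite [size _]/=; lia.
Qed.
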